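(* Let $k\ge3$, let $\{S_n\}$ be a perturbed sequence of weak shifts of degree $d$ corresponding to a uniformly bounded sequence of weak shift-like maps $\{\mathsf S_n\}$ of degree $\tilde d\le d-2$. Then there exists a sufficiently large $R>1$ such that \[U^+=\bigcup_{n\ge1} S(n)^{-1}\bigl(\operatorname{int} V_R^k\bigr)\quad\text{and}\quad U^-=\bigcup_{n\ge1}\bigl(S^{-1}(n)\bigr)^{-1}\bigl(\operatorname{int} V_R^-\bigr).\]
   Context: Let $Q_m(z)=z^m$ and $\mathbf H_d(w_1,\dots,w_{k-1})=\sum_{i=1}^{k-1}w_i^d$. A sequence $\{\mathsf S_n\}$ of maps $\mathsf S_n(z_1,\dots,z_k)=(z_2,\dots,z_k,\ a_nz_1+p_n(z_2,\dots,z_k))$ is a uniformly bounded sequence of weak shift-like maps of degree $\tilde d\ge1$ if each $a_nz_1+p_n$ has degree $\tilde d$, $p_n(\mathbf z)=\sum_{i\in I}\alpha_{i,n}\mathbf z^i$ with $I$ the multi-indices in $\mathbb{N}_0^{k-1}$ of total degree $\le\tilde d$, and there are constants $\tilde m,\tilde M>0$ with $\tilde m<|a_n|<\tilde M$ and $|\alpha_{i,n}|<\tilde M$ for all $n,i$. For $d\ge\tilde d+2$ the associated perturbed sequence of weak shifts of degree $d$ is \[S_n(z)=\mathsf S_n(z)+\bigl(0,\dots,0,Q_{d-1}(z_2),\mathbf H_d(z_2,\dots,z_k)\bigr),\] i.e. $S_n(z)=(z_2,\dots,z_{k-1},z_k+z_2^{d-1},a_nz_1+p_n(z_2,\dots,z_k)+\sum_{i=2}^k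 z_i^d)$; these are polynomial automorphisms of $\mathbb{C}^k$. Write $S(n)=S_n\circ\cdots\circ S_1$ and $S^{-1}(n)=S_n^{-1}\circ\cdots\circ S_1^{-1}$, and $\overline{F}$ for the extension of a polynomial map to $\mathbb{P}^k$, with $z\in\mathbb{C}^k$ identified with $[z:1]$. Let $X^+=[0:\cdots:0:1:0]$ (the $k$-th homogeneous coordinate equal to 1) and $X^-=[1:0:\cdots:0]$. Define $U^+=\{z\in\mathbb{C}^k:\overline{S(n)}([z:1])\to X^+\}$ and $U^-=\{z\in\mathbb{C}^k:\overline{S^{-1}(n)}([z:1])\to X^-\}$. For $R>0$, $V_R^k=\{z:|z_k|\ge\max\{(k-1)|z_1|,\dots,(k-1)|z_{k-1}|,R\}\}$ and $V_R^-=\{z:|z_1|\ge\max\{(k-1)|z_2|,\dots,(k-1)|z_k|,R\}\}$. *)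

From HB Require Import structures.
From mathcomp Require Import all_boot all_order all_algebra.
From mathcomp Require Import reals.
From mathcomp Require Import complex.
From mathcomp Require Import mpoly.

Set Implicit Arguments.
Unset Strict Implicit.
Unset Printing Implicit Defensive.

Import Order.TTheory GRing.Theory Num.Theory.
Local Open Scope ring_scope.
Local Open Scope complex_scope.

Section WeakShifts.
Variable R : realType.
Local Notation C := (R[i]).
Variable k : nat.

(* A point of C^k is a function 'I_k -> C; coordinate z_{m+1} of the paper
   is [coord z m] (0-indexed); out-of-range indices read as 0 (never used). *)
Definition coord (z : 'I_k -> C) (m : nat) : C :=
  if @insub _ (fun i => i < k)%N _ m is Some i then z i else 0.

Definition tailv (z : 'I_k -> C) : 'I_k.-1 -> C := fun i => coord z i.+1.

(* total degree of a polynomial (0 for the zero polynomial) *)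
Definition mdegree (n : nat) (q : {mpoly C[n]}) : nat := (msize q).-1.

(* the polynomial a z_1 + p(z_2,...,z_k) in the k variables z_1..z_k
   (written in {mpoly C[k.-1.+1]}, which is the ring in k variables for k>=1) *)
Definition shift_last_poly (a : C) (p : {mpoly C[k.-1]}) : {mpoly C[k.-1.+1]} :=
  a *: 'X_ord0 + mmap (fun c : C => c%:MP) (fun i => 'X_(lift ord0 i)) p.

(* the weak shift-like map  sfS(z) = (z_2, ..., z_k, a z_1 + p(z_2..z_k)) *)
Definition shift_like (a : C) (p : {mpoly C[k.-1]}) (z : 'I_k -> C) : 'I_k -> C :=
  fun j => if (j.+1 < k)%N then coord z j.+1
           else a * coord z 0 + p.@[tailv z].

(* the perturbed weak shift of degree d:
   S(z) = sfS(z) + (0, ..., 0, z_2^(d-1), sum_{i=2}^k z_i^d) *)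
Definition weak_shift (d : nat) (a : C) (p : {mpoly C[k.-1]}) (z : 'I_k -> C)
  : 'I_k -> C :=
  fun j => shift_like a p z j
           + (if (j.+2 == k)%N then coord z 1 ^+ d.-1
              else if (j.+1 == k)%N then \sum_(i < k | (0 < i)%N) z i ^+ d
              else 0).

Fixpoint iter_comp (F : nat -> ('I_k -> C) -> ('I_k -> C)) (n : nat)
  (z : 'I_k -> C) : 'I_k -> C :=
  match n with
  | 0 => z
  | n'.+1 => F n'.+1 (iter_comp F n' z)
  end.

Definition homcoord (z : 'I_k -> C) : 'I_k.+1 -> C :=
  fun i => if (i < k)%N then coord z i else 1.

Definition Xplus : 'I_k.+1 -> C := fun i => ((i : nat) == k.-1)%:R.
Definition Xminus : 'I_k.+1 -> C := fun i => ((i : nat) == 0%N)%:R.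

(* convergence in P^k of [v n] to [p] (p a nonzero homogeneous vector):
   in an affine chart {w_j != 0} containing [p], the affine coordinates
   w_i / w_j converge to p_i / p_j. *)
Definition proj_cvg (v : nat -> 'I_k.+1 -> C) (p : 'I_k.+1 -> C) : Prop :=
  exists j, p j != 0 /\
    (exists N, forall n, (N <= n)%N -> v n j != 0) /\
    forall i (e : R), 0 < e -> exists N, forall n, (N <= n)%N ->
      `|v n i / v n j - p i / p j| < e%:C.

Definition interior_Ck (A : ('I_k -> C) -> Prop) (z : 'I_k -> C) : Prop :=
  exists e : R, 0 < e /\
    forall w : 'I_k -> C, (forall i, `|w i - z i| < e%:C) -> A w.

Definition V_k (Rad : R) (z : 'I_k -> C) : Prop :=
  (forall m, (m < k.-1)%N -> (k.-1)%:R * `|coord z m| <= `|coord z k.-1|)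
  /\ Rad%:C <= `|coord z k.-1|.

Definition V_minus (Rad : R) (z : 'I_k -> C) : Prop :=
  (forall m, (0 < m < k)%N -> (k.-1)%:R * `|coord z m| <= `|coord z 0|)
  /\ Rad%:C <= `|coord z 0|.

End WeakShifts.

From Pilot Require Import Defs.
From HB Require Import structures.
From mathcomp Require Import all_boot all_order all_algebra.
From mathcomp Require Import reals.
From mathcomp Require Import complex.
From mathcomp Require Import mpoly.
From mathcomp Require Import ring lra zify.
Import Order.TTheory GRing.Theory Num.Theory.
Local Open Scope ring_scope.
Local Open Scope complex_scope.
Set Implicit Arguments.
Unset Strict Implicit.
Unset Printing Implicit Defensive.

(* Near infinity a weak shift is governed by its terms of top degree. If the
   last coordinate of z is large and dominates the others by the factor k - 1,
   then the last coordinate of S_n(z) is at least |z_k|^d / 4 while the other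
   coordinates are O(|z_k|^(d-1)): the cone V_R^k is mapped into itself, its
   dominant coordinate at least doubles, and the ratios z_i / z_k decay
   geometrically, so the orbit tends to X^+ in P^k. Conversely an orbit tending
   to X^+ eventually has small ratios and a large last coordinate, hence lies in
   the interior of V_R^k. Backwards, if S_n(z) = w with w in V_R^-, the equation
   for the (k-1)-th coordinate forces |z_k| >= |w_1|^(d-1) - |w_1|, and the one
   for the last coordinate, where z_k^d must be compensated by a_n z_1, forces
   |z_1| >= |z_k|^2 / (2 M); so V_R^- plays the same role for the inverse maps,
   with X^- in place of X^+. *)

(* vector.v also exports a [coord]. *)
Local Notation coord := Defs.coord.

(** * Real modulus of complex numbers *)

Section ComplexModulus.
Variable R : rcfType.
Local Notation C := R[i].
Implicit Types x y : C.

Definition cabs x : R := complex.Re `|x|.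

Lemma cabsE x : `|x| = (cabs x)%:C.
Proof. by rewrite /cabs normc_def. Qed.

Lemma cabs_ge0 x : 0 <= cabs x.
Proof. by have := normr_ge0 x; rewrite cabsE ler0c. Qed.

Lemma cabs_eq0 x : (cabs x == 0) = (x == 0).
Proof. by rewrite -(normr_eq0 x) cabsE; apply/eqP/eqP => [->|[]]. Qed.

Lemma cabs0 : cabs 0 = 0.
Proof. by apply/eqP; rewrite cabs_eq0. Qed.

Lemma cabs1 : cabs 1 = 1.
Proof. by apply: complexI; rewrite -cabsE normr1. Qed.

Lemma cabsN x : cabs (- x) = cabs x.
Proof. by apply: complexI; rewrite -!cabsE normrN. Qed.

Lemma cabsM x y : cabs (x * y) = cabs x * cabs y.
Proof. by apply: complexI; rewrite rmorphM -!cabsE normrM. Qed.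

Lemma cabsX x n : cabs (x ^+ n) = cabs x ^+ n.
Proof. by apply: complexI; rewrite rmorphXn -!cabsE normrX. Qed.

Lemma cabsV x : cabs x^-1 = (cabs x)^-1.
Proof. by apply: complexI; rewrite fmorphV -!cabsE normfV. Qed.

Lemma cabs_div x y : cabs (x / y) = cabs x / cabs y.
Proof. by rewrite cabsM cabsV. Qed.

Lemma cabs_prod (I : Type) (r : seq I) (P : pred I) (F : I -> C) :
  cabs (\prod_(i <- r | P i) F i) = \prod_(i <- r | P i) cabs (F i).
Proof. exact: (big_morph _ cabsM cabs1). Qed.

Lemma ler_cabsD x y : cabs (x + y) <= cabs x + cabs y.
Proof. by rewrite -lecR rmorphD -!cabsE ler_normD. Qed.

Lemma ler_cabsB x y : cabs x - cabs y <= cabs (x + y).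
Proof. have := ler_cabsD (x + y) (- y); rewrite addrK cabsN; lra. Qed.

Lemma ler_cabs_sum (I : Type) (r : seq I) (P : pred I) (F : I -> C) :
  cabs (\sum_(i <- r | P i) F i) <= \sum_(i <- r | P i) cabs (F i).
Proof.
elim/big_rec2: _ => [|i y1 y2 _ h]; first by rewrite cabs0.
by apply: le_trans (ler_cabsD _ _) _; rewrite lerD2l.
Qed.

Lemma lec_cabs x e : (e%:C <= `|x|) = (e <= cabs x).
Proof. by rewrite cabsE lecR. Qed.

Lemma ltc_cabs x e : (`|x| < e%:C) = (cabs x < e).
Proof. by rewrite cabsE ltcR. Qed.

Lemma lec_natM_cabs n x y : (n%:R * `|x| <= `|y|) = (n%:R * cabs x <= cabs y).
Proof. by rewrite !cabsE -(rmorph_nat (real_complex R)) -rmorphM lecR. Qed.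

End ComplexModulus.

(** * Multivariate polynomials *)

Section LiftMonomial.
Variable n : nat.

Definition lift0_mnm (m : 'X_{1..n}) : 'X_{1..n.+1} :=
  (\sum_(i < n) U_(lift ord0 i) *+ m i)%MM.

Lemma lift0_mnmE m j : lift0_mnm m (lift ord0 j) = m j.
Proof.
rewrite /lift0_mnm mnm_sumE (bigD1 j) //= big1 ?addn0.
  by rewrite mulmnE mnm1E eqxx mul1n.
by move=> i ne; rewrite mulmnE mnm1E (inj_eq (@lift_inj _ ord0)) (negbTE ne).
Qed.

Lemma lift0_mnm0 m : lift0_mnm m ord0 = 0%N.
Proof.
rewrite /lift0_mnm mnm_sumE big1 // => i _.
by rewrite mulmnE mnm1E eq_sym (negbTE (neq_lift _ _)).
Qed.

Lemma lift0_mnm_inj : injective lift0_mnm.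
Proof. by move=> m1 m2 e; apply/mnmP => j; rewrite -!lift0_mnmE e. Qed.

Lemma mdeg_lift0_mnm m : mdeg (lift0_mnm m) = mdeg m.
Proof.
rewrite /lift0_mnm mdeg_sum mdegE; apply: eq_bigr => i _.
by rewrite mdegMn mdeg1 mul1n.
Qed.

Lemma mmap1_lift0 (S : comNzRingType) m :
  mmap1 (fun i : 'I_n => ('X_(lift ord0 i) : {mpoly S[n.+1]})) m = 'X_[lift0_mnm m].
Proof.
rewrite /mmap1 /lift0_mnm.
rewrite (big_morph (fun m => 'X_[m] : {mpoly S[n.+1]}) (@mpolyXD _ _) (@mpolyX0 _ _)).
by apply: eq_bigr => i _; rewrite mpolyXn.
Qed.

End LiftMonomial.

Section ShiftLastPoly.
Variables (R : realType) (k : nat) (a : R[i]) (p : {mpoly R[i][k.-1]}).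

Lemma mcoeff_shift_last_poly m : (shift_last_poly a p)@_(lift0_mnm m) = p@_m.
Proof.
rewrite /shift_last_poly mcoeffD mcoeffZ mcoeffX.
have -> : (U_(ord0) == lift0_mnm m)%MM = false.
  by apply/negbTE/eqP => /mnmP /(_ ord0); rewrite lift0_mnm0 mnm1E eqxx.
rewrite mulr0 add0r /mmap raddf_sum [in RHS](mpolyE p) raddf_sum.
apply: eq_bigr => m' _.
by rewrite /= mmap1_lift0 mcoeffCM mcoeffZ !mcoeffX (inj_eq (@lift0_mnm_inj _)).
Qed.

Lemma msize_shift_last_poly : (msize p <= msize (shift_last_poly a p))%N.
Proof.
rewrite [X in (X <= _)%N]msizeE; apply/bigmax_leqP_seq => m m_in _.
rewrite -mdeg_lift0_mnm; apply: msize_mdeg_lt.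
by rewrite mcoeff_msupp mcoeff_shift_last_poly -mcoeff_msupp.
Qed.

End ShiftLastPoly.

Section EvalBound.
Variables (R : rcfType) (n b : nat) (M rho : R) (p : {mpoly R[i][n]}) (v : 'I_n -> R[i]).
Hypotheses (p_size : (msize p <= b.+1)%N) (p_coef : forall m, cabs p@_m <= M)
  (rho_ge1 : 1 <= rho) (v_le : forall i, cabs (v i) <= rho).

Lemma cabs_meval_le : cabs p.@[v] <= #|{: 'X_{1..n < b.+1}}|%:R * M * rho ^+ b.
Proof.
rewrite {1}(mpolywE p_size) raddf_sum /=; apply: le_trans (ler_cabs_sum _ _ _) _.
rewrite -mulrA mulr_natl -sumr_const; apply: ler_sum => m _.
rewrite mevalZ mevalX cabsM cabs_prod.
apply: ler_pM; rewrite ?cabs_ge0 //.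
  by apply: prodr_ge0 => i _; rewrite cabsX exprn_ge0 ?cabs_ge0.
apply: (@le_trans _ _ (\prod_(i < n) rho ^+ m i)).
  apply: ler_prod => i _; rewrite cabsX exprn_ge0 ?cabs_ge0 //=.
  by rewrite lerXn2r ?nnegrE ?cabs_ge0 ?v_le ?(le_trans ler01).
rewrite -(big_morph _ (exprD rho) (expr0 rho)) -mdegE.
by apply: ler_weXn2l => //; have := bmdeg m.
Qed.

End EvalBound.

(** * Coordinates and dominance *)

Section Coordinates.
Variables (R : realType) (k : nat).
Local Notation C := R[i].
Implicit Types z : 'I_k -> C.

Lemma coord_lt z m (h : (m < k)%N) : coord z m = z (Ordinal h).
Proof. by rewrite /coord (insubT (fun i => i < k)%N h). Qed.

Lemma coord_ge z m : (k <= m)%N -> coord z m = 0.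
Proof. by move=> h; rewrite /coord insubF // ltnNge h. Qed.

Lemma coord_ord z (i : 'I_k) : coord z i = z i.
Proof. by rewrite (coord_lt z (ltn_ord i)); congr z; apply: val_inj. Qed.

Lemma ler_cabs_sumD1 (f : 'I_k -> C) (l : 'I_k) (c : R) : (0 < l)%N ->
  (forall i : 'I_k, (0 < i)%N -> i != l -> cabs (f i) <= c) -> 0 <= c ->
  cabs (\sum_(i < k | (0 < i)%N) f i - f l) <= (k.-1)%:R * c.
Proof.
move=> l_gt0 f_le c_ge0; rewrite (bigD1 l) //= addrAC subrr add0r.
apply: le_trans (ler_cabs_sum _ _ _) _.
apply: (@le_trans _ _ (\sum_(i < k | (0 < i)%N && (i != l)) c)).
  by apply: ler_sum => i /andP [/f_le h /h].
rewrite sumr_const mulrC mulr_natr ler_wpMn2l //.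
apply: (@leq_trans #|predC1 l|); last by rewrite cardC1 card_ord.
by apply: subset_leq_card; apply/subsetP => i; rewrite !inE => /andP [].
Qed.

Variables (d : nat) (a : C) (p : {mpoly C[k.-1]}).
Local Notation F := (weak_shift d a p).

Lemma weak_shift_coord z m : (m.+2 < k)%N -> coord (F z) m = coord z m.+1.
Proof.
move=> h; have m_lt : (m < k)%N by lia.
rewrite (coord_lt _ m_lt) /weak_shift /shift_like /=.
have -> : (m.+1 < k)%N by lia.
have -> : (m.+2 == k) = false by apply/eqP; lia.
have -> : (m.+1 == k) = false by apply/eqP; lia.
by rewrite addr0.
Qed.

Lemma weak_shift_coord_penult z : (2 <= k)%N ->
  coord (F z) k.-2 = coord z k.-1 + coord z 1 ^+ d.-1.
Proof.
move=> h; have k2_lt : (k.-2 < k)%N by lia.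
rewrite (coord_lt _ k2_lt) /weak_shift /shift_like /=.
have -> : (k.-2.+1 < k)%N by lia.
have -> : k.-2.+2 == k by apply/eqP; lia.
by have -> : k.-2.+1 = k.-1 by lia.
Qed.

Lemma weak_shift_coord_last z : (0 < k)%N ->
  coord (F z) k.-1 = a * coord z 0 + p.@[tailv z] + \sum_(i < k | (0 < i)%N) z i ^+ d.
Proof.
move=> h; have k1_lt : (k.-1 < k)%N by lia.
rewrite (coord_lt _ k1_lt) /weak_shift /shift_like /=.
have -> : (k.-1.+1 < k)%N = false by lia.
have -> : (k.-1.+2 == k) = false by apply/eqP; lia.
by have -> : k.-1.+1 == k by apply/eqP; lia.
Qed.

End Coordinates.

Section Dominance.
Variables (R : realType) (k : nat).
Local Notation C := R[i].
Local Notation K := ((k.-1)%:R : R).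
Implicit Types x y : 'I_k -> C.

Definition dominant (l : nat) (r : R) x : Prop :=
  r <= cabs (coord x l) /\
  forall m, (m < k)%N -> m != l -> K * cabs (coord x m) <= cabs (coord x l).

Definition expanding_step (l : nat) (r c : R) x y : Prop :=
  [/\ dominant l r y, 2 * cabs (coord x l) <= cabs (coord y l) &
      forall m, (m < k)%N -> m != l ->
        cabs (coord y m) * cabs (coord x l) <= c * cabs (coord y l)].

Lemma V_k_dominant r x : V_k r x <-> dominant k.-1 r x.
Proof.
rewrite /V_k /dominant lec_cabs; split=> [[x_dom r_le] | [r_le x_dom]].
  by split=> // m m_lt m_neq; move: (x_dom m); rewrite lec_natM_cabs; apply; lia.
by split=> // m m_lt; rewrite lec_natM_cabs; apply: x_dom; lia.
Qed.

Lemma V_minus_dominant r x : V_minus r x <-> dominant 0 r x.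
Proof.
rewrite /V_minus /dominant lec_cabs; split=> [[x_dom r_le] | [r_le x_dom]].
  by split=> // m m_lt m_neq; move: (x_dom m); rewrite lec_natM_cabs; apply; lia.
by split=> // m m_lt; rewrite lec_natM_cabs; apply: x_dom; lia.
Qed.

Lemma dominant_cabs_le l r x : (1 < k)%N -> dominant l r x ->
  forall m, cabs (coord x m) <= cabs (coord x l).
Proof.
move=> k_gt1 [_ x_dom] m; have [->|m_neq] := eqVneq m l; first by [].
have [m_lt|m_ge] := ltnP m k; last by rewrite coord_ge ?cabs0 ?cabs_ge0.
have K_ge1 : 1 <= K by rewrite ler1n; lia.
have := x_dom m m_lt m_neq; have := cabs_ge0 (coord x m); nra.
Qed.

End Dominance.

(** * One-step estimates for the weak shifts *)

(* [lia] after clearing the hypotheses about real numbers, which [zify] would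
   otherwise inspect one by one, at a large cost. *)
Ltac nat_lia := repeat match goal with
  | H : is_true (@Order.le _ _ _ _) |- _ => clear H
  | H : is_true (@Order.lt _ _ _ _) |- _ => clear H
  end; lia.

Lemma expn_le_dominated (R : realFieldType) (K x rho : R) n :
  2 <= K -> 0 <= x -> K * x <= rho -> 2 * K * x ^+ n.+2 <= rho ^+ n.+2.
Proof.
move=> K_ge2 x_ge0 Kx_le; have x_le : x <= rho by nra.
have xn_le : x ^+ n <= rho ^+ n by rewrite lerXn2r // nnegrE; lra.
have sq_le : 2 * K * x ^+ 2 <= rho ^+ 2.
  have : (K * x) * (K * x) <= rho * rho by apply: ler_pM; nra.
  have : 0 <= K * x * x by rewrite !mulr_ge0 //; lra.
  rewrite expr2; nra.
have expE y : y ^+ n.+2 = y ^+ 2 * y ^+ n by rewrite -exprD addnC addn2.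
rewrite !expE mulrA.
by apply: ler_pM; rewrite ?exprn_ge0 ?mulr_ge0 //; lra.
Qed.

Section EscapeRadius.
Variables (R : realType) (k dt : nat) (Mt : R).
Hypothesis k_ge3 : (3 <= k)%N.
Local Notation K := ((k.-1)%:R : R).

Lemma ler2_prednr : 2 <= K.
Proof. by rewrite -[2]/(2%:R) ler_nat; nat_lia. Qed.

Definition tail_bound : R := #|{: 'X_{1..k.-1 < dt.+1}}|%:R * Mt.

Definition escape_radius : R := 2 + 8 * K + 2 * Mt * K + 4 * (1 + Mt + tail_bound).

Lemma tail_bound_ge0 : 0 <= Mt -> 0 <= tail_bound.
Proof. by move=> Mt_ge0; rewrite mulr_ge0 ?ler0n. Qed.

Lemma escape_radius_ge : 0 <= Mt -> [/\ 2 <= escape_radius, 8 * K <= escape_radius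
  & 2 * Mt * K <= escape_radius].
Proof.
move=> Mt_ge0; have K_ge2 := ler2_prednr; have B_ge0 := tail_bound_ge0 Mt_ge0.
have MtK_ge0 : 0 <= Mt * K by rewrite mulr_ge0 //; lra.
rewrite /escape_radius.
by split; lra.
Qed.

Lemma escape_radius_sq : 0 <= Mt -> 4 * (1 + Mt + tail_bound) <= escape_radius ^+ 2.
Proof.
move=> Mt_ge0; have [r_ge2 _ _] := escape_radius_ge Mt_ge0.
have := ler2_prednr; have := tail_bound_ge0 Mt_ge0.
rewrite expr2 /escape_radius in r_ge2 *; nra.
Qed.

End EscapeRadius.

Section WeakShiftEstimates.
Variables (R : realType) (k dt d : nat) (Mt : R) (a : R[i]) (p : {mpoly R[i][k.-1]}).
Hypotheses (k_ge3 : (3 <= k)%N) (dt_gt0 : (0 < dt)%N) (d_ge : (dt.+2 <= d)%N)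
  (a_le : cabs a <= Mt) (p_coef_le : forall m, cabs p@_m <= Mt)
  (p_size : (msize p <= dt.+1)%N).
Local Notation C := R[i].
Local Notation K := ((k.-1)%:R : R).
Local Notation F := (weak_shift d a p).
Local Notation powsum z := (\sum_(i < k | (0 < i)%N) z i ^+ d).
Local Notation tail_bound := (tail_bound k dt Mt).
Local Notation escape_radius := (escape_radius k dt Mt).

(* [lra] ignores section hypotheses; proofs destructure these bundles locally. *)
Let Mt_nneg : 0 <= Mt := le_trans (cabs_ge0 a) a_le.
Let bounds : [/\ 2 <= K, 0 <= Mt & 0 <= tail_bound] :=
  And3 (@ler2_prednr R k k_ge3) Mt_nneg (@tail_bound_ge0 R k dt Mt Mt_nneg).
Let radius_ge := @escape_radius_ge R k dt Mt k_ge3 Mt_nneg.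
Let radius_sq := @escape_radius_sq R k dt Mt k_ge3 Mt_nneg.

Lemma cabs_tail_eval_le z rho : 1 <= rho ->
  (forall m, (0 < m)%N -> cabs (coord z m) <= rho) ->
  cabs p.@[tailv z] <= tail_bound * rho ^+ d.-2.
Proof.
move=> rho_ge1 z_le; apply: le_trans (cabs_meval_le p_size p_coef_le rho_ge1 _) _.
  by move=> i; apply: z_le.
have [_ _ B_ge0] := bounds; rewrite ler_wpM2l // ler_weXn2l //; nat_lia.
Qed.

Section Forward.
Variable z : 'I_k -> C.
Hypothesis z_dom : dominant k.-1 escape_radius z.
Local Notation rho := (cabs (coord z k.-1)).

Lemma forward_coord_le m : cabs (coord z m) <= rho.
Proof. by apply: dominant_cabs_le z_dom _; nat_lia. Qed.

Lemma weak_shift_head_le m : (m < k.-1)%N -> cabs (coord (F z) m) <= 2 * rho ^+ d.-1.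
Proof.
move=> m_lt; have [r_ge2 _ _] := radius_ge; have [rho_ge _] := z_dom.
have rho_le : rho <= rho ^+ d.-1 by rewrite ler_eXnr //; [nat_lia | lra].
have [m_lt2|m_ge] := ltnP m.+2 k.
  by rewrite weak_shift_coord //; have := forward_coord_le m.+1; lra.
have -> : m = k.-2 by nat_lia.
rewrite weak_shift_coord_penult; last by nat_lia.
apply: le_trans (ler_cabsD _ _) _; rewrite cabsX.
have : cabs (coord z 1) ^+ d.-1 <= rho ^+ d.-1.
  by rewrite lerXn2r ?nnegrE ?cabs_ge0 ?forward_coord_le //; lra.
lra.
Qed.

Lemma powsum_sub_last_le : cabs (powsum z - coord z k.-1 ^+ d) <= rho ^+ d / 2.
Proof.
have [K_ge2 _ _] := bounds; have dE : d = d.-2.+2 by nat_lia.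
have l_lt : (k.-1 < k)%N by nat_lia.
pose l := Ordinal l_lt.
have -> : coord z k.-1 ^+ d = z l ^+ d by rewrite -(coord_ord z l).
have -> : rho ^+ d / 2 = K * (rho ^+ d / (2 * K)) by field; lra.
apply: ler_cabs_sumD1 => [|i _ i_neq|]; first by rewrite /=; nat_lia.
- rewrite cabsX ler_pdivlMr ?mulr_gt0 //; last lra.
  rewrite mulrC dE; apply: expn_le_dominated; rewrite ?cabs_ge0 //.
  rewrite -coord_ord; case: z_dom => _; apply; first exact: ltn_ord.
  by apply: contra i_neq => /eqP i_eq; apply/eqP/val_inj.
- by rewrite divr_ge0 ?exprn_ge0 ?cabs_ge0 //; lra.
Qed.

Lemma affine_part_le : cabs (a * coord z 0 + p.@[tailv z]) <= rho ^+ d / 4.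
Proof.
have [r_ge2 _ _] := radius_ge; have r_sq := radius_sq.
have [_ Mt_ge0 B_ge0] := bounds; have [rho_ge _] := z_dom.
set P := rho ^+ d.-2.
have rhoE : rho ^+ d = P * rho ^+ 2 by rewrite -exprD; congr (_ ^+ _); nat_lia.
have rho_le : rho <= P by rewrite ler_eXnr //; [nat_lia | lra].
have tail_le : cabs p.@[tailv z] <= tail_bound * P.
  by apply: cabs_tail_eval_le => [|m _]; [lra | exact: forward_coord_le].
have head_le : cabs a * cabs (coord z 0) <= Mt * P.
  by rewrite ler_pM ?cabs_ge0 //; have := forward_coord_le 0; lra.
have rho_sq : 4 * (Mt + tail_bound) <= rho ^+ 2.
  have : escape_radius ^+ 2 <= rho ^+ 2 by rewrite lerXn2r ?nnegrE; lra.
  lra.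
have : 4 * (Mt + tail_bound) * P <= rho ^+ 2 * P by rewrite ler_wpM2r //; lra.
have := ler_cabsD (a * coord z 0) p.@[tailv z]; rewrite cabsM rhoE; lra.
Qed.

Lemma weak_shift_last_ge : rho ^+ d / 4 <= cabs (coord (F z) k.-1).
Proof.
rewrite weak_shift_coord_last; last by nat_lia.
have := powsum_sub_last_le; have := affine_part_le.
set A := a * coord z 0 + _; set s := powsum z => A_le s_le.
have -> : A + s = coord z k.-1 ^+ d + (A + (s - coord z k.-1 ^+ d)) by ring.
apply: le_trans (ler_cabsB _ _); have := ler_cabsD A (s - coord z k.-1 ^+ d).
by rewrite cabsX; lra.
Qed.

Lemma weak_shift_expanding : expanding_step k.-1 escape_radius 8 z (F z).
Proof.
have [r_ge2 r_ge8K _] := radius_ge; have [K_ge2 _ _] := bounds.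
have [rho_ge _] := z_dom; have last_ge := weak_shift_last_ge.
set w := F z in last_ge *; set P := rho ^+ d.-1.
have rhoE : rho ^+ d = P * rho by rewrite -exprSr; congr (_ ^+ _); nat_lia.
have rho_le : rho <= P by rewrite ler_eXnr //; [nat_lia | lra].
rewrite rhoE in last_ge.
have head_le m : (m < k)%N -> m != k.-1 -> cabs (coord w m) <= 2 * P.
  by move=> m_lt m_neq; apply: weak_shift_head_le; nat_lia.
have KP_le : 8 * K * P <= P * rho by rewrite mulrC ler_wpM2l; lra.
have rho8_le : 8 * rho <= P * rho by rewrite ler_wpM2r; lra.
have K_ge0 : 0 <= K by lra.
have rho_ge0 : 0 <= rho by lra.
split; first split.
- lra.
- by move=> m m_lt m_neq; have := ler_wpM2l K_ge0 (head_le m m_lt m_neq); lra.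
- lra.
- by move=> m m_lt m_neq; have := ler_wpM2r rho_ge0 (head_le m m_lt m_neq); lra.
Qed.

End Forward.

Section Backward.
Variables z w : 'I_k -> C.
Hypotheses (Fz : F z = w) (w_dom : dominant 0 escape_radius w).
Local Notation rho := (cabs (coord w 0)).
Local Notation sigma := (cabs (coord z k.-1)).

Lemma weak_shift_preimage_mid m : (0 < m)%N -> (m.+1 < k)%N -> coord z m = coord w m.-1.
Proof. by move=> m_gt0 m_lt; rewrite -Fz weak_shift_coord ?prednK //; nat_lia. Qed.

Lemma weak_shift_preimage_mid_le m : (0 < m)%N -> (m.+1 < k)%N -> cabs (coord z m) <= rho.
Proof.
by move=> m_gt0 m_lt; rewrite weak_shift_preimage_mid //; apply: dominant_cabs_le w_dom _; nat_lia.
Qed.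

Lemma weak_shift_preimage_last_ge : rho ^+ d.-1 - rho <= sigma.
Proof.
have z1 : coord z 1 = coord w 0 by rewrite weak_shift_preimage_mid //; nat_lia.
have := weak_shift_coord_penult d a p z; rewrite Fz z1 => /(_ (ltnW k_ge3)) wk.
have -> : coord z k.-1 = - coord w 0 ^+ d.-1 + coord w k.-2 by rewrite wk; ring.
have := ler_cabsB (- coord w 0 ^+ d.-1) (coord w k.-2); rewrite cabsN cabsX.
by have := dominant_cabs_le (ltnW k_ge3) w_dom k.-2; lra.
Qed.

Lemma weak_shift_preimage_tail : [/\ rho <= sigma, rho ^+ d <= 2 * sigma ^+ 2
  & forall m, (0 < m)%N -> cabs (coord z m) <= sigma].
Proof.
have [r_ge2 _ _] := radius_ge; have [rho_ge _] := w_dom.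
have last_ge := weak_shift_preimage_last_ge.
have rho_sq : rho * rho <= rho ^+ d.-1 by rewrite -expr2 ler_weXn2l //; [lra | nat_lia].
have rho2_le : 2 * rho <= rho * rho by rewrite ler_wpM2r; lra.
have rho_le : rho <= sigma by lra.
split=> // [|m m_gt0].
  have rhoE : rho ^+ d = rho ^+ d.-1 * rho by rewrite -exprSr; congr (_ ^+ _); nat_lia.
  have : rho ^+ d.-1 * rho <= (sigma + rho) * rho by rewrite ler_wpM2r; lra.
  have : sigma * rho <= sigma * sigma by rewrite ler_wpM2l; lra.
  have : rho * rho <= sigma * rho by rewrite ler_wpM2r; lra.
  by rewrite rhoE expr2; lra.
have [m_lt|m_ge] := ltnP m.+1 k.
  by have := weak_shift_preimage_mid_le m_gt0 m_lt; lra.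
have [m_lt|m_ge'] := ltnP m k; last by rewrite coord_ge // cabs0 cabs_ge0.
by have -> : m = k.-1 by nat_lia.
Qed.

Lemma weak_shift_preimage_powsum_le : cabs (powsum z - coord z k.-1 ^+ d) <= K * rho ^+ d.
Proof.
have [r_ge2 _ _] := radius_ge; have [rho_ge _] := w_dom.
have l_lt : (k.-1 < k)%N by nat_lia.
pose l := Ordinal l_lt.
have -> : coord z k.-1 ^+ d = z l ^+ d by rewrite -(coord_ord z l).
apply: ler_cabs_sumD1 => [|i i_gt0 i_neq|]; first by rewrite /=; nat_lia.
- have i_neq' : (i : nat) != k.-1.
    by apply: contra i_neq => /eqP i_eq; apply/eqP/val_inj.
  have zi_le : cabs (z i) <= rho.
    by rewrite -coord_ord weak_shift_preimage_mid_le //; have := ltn_ord i; nat_lia.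
  by rewrite cabsX lerXn2r // nnegrE ?cabs_ge0 //; lra.
- by rewrite exprn_ge0 //; lra.
Qed.

Lemma weak_shift_preimage_first_ge : sigma ^+ d / 2 <= Mt * cabs (coord z 0).
Proof.
have [rho_le rhod_le z_le] := weak_shift_preimage_tail.
have [r_ge2 r_ge8K _] := radius_ge; have r_sq := radius_sq.
have [K_ge2 Mt_ge0 B_ge0] := bounds; have [rho_ge _] := w_dom.
have s_le := weak_shift_preimage_powsum_le.
set S := sigma ^+ d.-2.
have sigmaE : sigma ^+ d = S * sigma ^+ 2 by rewrite -exprD; congr (_ ^+ _); nat_lia.
have sigma_le : sigma <= S by rewrite ler_eXnr //; [nat_lia | lra].
have tail_le : cabs p.@[tailv z] <= tail_bound * S.
  by apply: cabs_tail_eval_le => //; lra.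
have := weak_shift_coord_last d a p z; rewrite Fz => /(_ (ltnW (ltnW k_ge3))).
set s := powsum z in s_le * => wl.
have zE : coord z k.-1 ^+ d
    = coord w k.-1 - a * coord z 0 - p.@[tailv z] - (s - coord z k.-1 ^+ d).
  by rewrite wl; ring.
have := ler_cabsD (coord w k.-1 - a * coord z 0 - p.@[tailv z]) (- (s - coord z k.-1 ^+ d)).
have := ler_cabsD (coord w k.-1 - a * coord z 0) (- p.@[tailv z]).
have := ler_cabsD (coord w k.-1) (- (a * coord z 0)).
rewrite -zE !cabsN cabsX cabsM sigmaE.
have : cabs a * cabs (coord z 0) <= Mt * cabs (coord z 0) by rewrite ler_wpM2r ?cabs_ge0.
have : cabs (coord w k.-1) <= rho by apply: dominant_cabs_le w_dom _; nat_lia.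
have : 4 * (1 + tail_bound) * S <= sigma ^+ 2 * S.
  rewrite ler_wpM2r ?exprn_ge0 ?cabs_ge0 //.
  have : escape_radius ^+ 2 <= sigma ^+ 2 by rewrite lerXn2r ?nnegrE; lra.
  lra.
have : 8 * K * sigma ^+ 2 <= S * sigma ^+ 2.
  by rewrite ler_wpM2r ?exprn_ge0 ?cabs_ge0 //; lra.
have : K * rho ^+ d <= K * (2 * sigma ^+ 2) by rewrite ler_wpM2l //; lra.
lra.
Qed.

Lemma weak_shift_preimage_expanding : 0 < Mt -> expanding_step 0 escape_radius (2 * Mt) w z.
Proof.
move=> Mt_gt0; have [rho_le _ z_le] := weak_shift_preimage_tail.
have first_ge := weak_shift_preimage_first_ge.
have [r_ge2 _ r_geMK] := radius_ge; have [K_ge2 _ _] := bounds.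
have [rho_ge _] := w_dom.
have sigma_sq : sigma * sigma <= sigma ^+ d by rewrite -expr2 ler_weXn2l //; [lra | nat_lia].
have sigma_K : K * sigma <= cabs (coord z 0).
  rewrite -(ler_pM2l Mt_gt0).
  have : 2 * Mt * K * sigma <= sigma * sigma by rewrite ler_wpM2r; lra.
  lra.
have sigma_2K : 2 * sigma <= K * sigma by rewrite ler_wpM2r; lra.
have Kz_le m : (0 < m)%N -> K * cabs (coord z m) <= K * sigma.
  by move=> m_gt0; rewrite ler_wpM2l ?z_le //; lra.
split; first split.
- lra.
- by move=> m _ m_neq; apply: le_trans (Kz_le m _) sigma_K; nat_lia.
- lra.
- move=> m _ m_neq; have m_gt0 : (0 < m)%N by nat_lia.
  have : cabs (coord z m) * rho <= sigma * sigma.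
    by apply: ler_pM; rewrite ?cabs_ge0 ?z_le //; lra.
  lra.
Qed.

End Backward.

End WeakShiftEstimates.

(** * Escape to the points at infinity *)

Lemma eventually_forall_fin (T : finType) (P : T -> nat -> Prop) :
  (forall i, exists N, forall n, (N <= n)%N -> P i n) ->
  exists N, forall i n, (N <= n)%N -> P i n.
Proof.
move=> ev; suff [N hN] : exists N, forall i n, i \in enum T -> (N <= n)%N -> P i n.
  by exists N => i n; apply: hN; rewrite mem_enum.
elim: (enum T) => [|i s [N hN]]; first by exists 0%N.
have [Ni hi] := ev i; exists (maxn N Ni) => j n; rewrite inE => /orP [/eqP -> | j_in] n_ge.
  by apply: hi; apply: leq_trans n_ge; apply: leq_maxr.
by apply: hN => //; apply: leq_trans n_ge; apply: leq_maxl.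
Qed.

Lemma geometric_decay (R : archiFieldType) (c e : R) (N0 : nat) : 0 <= c -> 0 < e ->
  exists N, forall n, (N <= n)%N -> c / 2 ^+ (n - N0) < e.
Proof.
move=> c_ge0 e_gt0; have := @archi_boundP R (c / e); set M := Num.Def.archi_bound _.
move=> /(_ (divr_ge0 c_ge0 (ltW e_gt0))); rewrite ltr_pdivrMr // => cM.
exists (N0 + M)%N => n n_ge; have pow_gt0 : 0 < (2 : R) ^+ (n - N0) by rewrite exprn_gt0.
rewrite ltr_pdivrMr //; apply: lt_le_trans cM _; rewrite [e * _]mulrC ler_pM2r //.
apply: (@le_trans _ _ (2 ^+ M)); last by rewrite ler_weXn2l ?ler1n //; lia.
by rewrite -natrX ler_nat ltnW // ltn_expl.
Qed.

Section Interior.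
Variables (R : realType) (k : nat).
Implicit Types A B : ('I_k -> R[i]) -> Prop.

Lemma interior_Ck_mem A x : interior_Ck A x -> A x.
Proof. by case=> e [e_gt0 ballA]; apply: ballA => i; rewrite subrr normr0 ltcR. Qed.

Lemma interior_Ck_sub A B x : (forall y, A y -> B y) -> interior_Ck A x -> interior_Ck B x.
Proof. by move=> AB [e [e_gt0 ballA]]; exists e; split=> // y /ballA /AB. Qed.

End Interior.

Section Escape.
Variables (R : realType) (k l : nat).
Hypothesis l_lt : (l < k)%N.
Local Notation C := R[i].
Local Notation K := ((k.-1)%:R : R).
Implicit Types (x y : 'I_k -> C) (s : nat -> 'I_k -> C).

Definition hom_basis : 'I_k.+1 -> C := fun i => ((i : nat) == l)%:R.

Lemma homcoord_basis_cvg s (c : R) (N0 : nat) : 0 <= c ->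
  (forall n, (N0 <= n)%N -> coord (s n) l != 0) ->
  (forall n i, (N0 <= n)%N ->
     cabs (homcoord (s n) i / coord (s n) l - hom_basis i) <= c / 2 ^+ (n - N0)) ->
  proj_cvg (fun n => homcoord (s n)) hom_basis.
Proof.
move=> c_ge0 s_neq0 s_ratio; have l_lt1 : (l < k.+1)%N by lia.
have homl x : homcoord x (Ordinal l_lt1) = coord x l by rewrite /homcoord /= l_lt.
have basis_l : hom_basis (Ordinal l_lt1) = 1 by rewrite /hom_basis /= eqxx.
exists (Ordinal l_lt1); split; first by rewrite basis_l oner_eq0.
split; first by exists N0 => n n_ge; rewrite homl s_neq0.
move=> i e e_gt0; have [N decay] := geometric_decay N0 c_ge0 e_gt0.
exists (maxn N N0) => n; rewrite geq_max => /andP [n_geN n_ge0].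
rewrite homl basis_l divr1 ltc_cabs; apply: le_lt_trans (decay n n_geN).
exact: s_ratio.
Qed.

Definition expanding_orbit (r c : R) s : Prop :=
  forall n, (0 < n)%N -> dominant l r (s n) -> expanding_step l r c (s n) (s n.+1).

Lemma expanding_orbit_growth s (r c : R) n0 : 1 <= r -> (0 < n0)%N ->
  expanding_orbit r c s -> dominant l r (s n0) ->
  forall j, dominant l r (s (n0 + j)%N) /\ 2 ^+ j <= cabs (coord (s (n0 + j)%N) l).
Proof.
move=> r_ge1 n0_gt0 s_exp s_dom; elim=> [|j [dom_j grow_j]].
  by rewrite addn0 expr0; split=> //; case: s_dom => r_le _; lra.
have [dom_j1 grow_j1 _] := s_exp _ (ltn_addr _ n0_gt0) dom_j.
by rewrite addnS exprS; split=> //; lra.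
Qed.

Lemma expanding_step_homcoord_le x y (r c : R) i : 0 <= c -> 0 < cabs (coord x l) ->
  expanding_step l r c x y ->
  cabs (homcoord y i / coord y l - hom_basis i) <= (c + 1) / cabs (coord x l).
Proof.
move=> c_ge0 xl_gt0 [_ grow ratio]; set yl := cabs (coord y l) in grow ratio.
have yl_gt0 : 0 < yl by lra.
have yl_neq0 : coord y l != 0 by rewrite -cabs_eq0 -/yl gt_eqF.
rewrite ler_pdivlMr //; have [i_lt|i_ge] := ltnP i k.
  have [i_eq|i_neq] := eqVneq (i : nat) l.
    rewrite /hom_basis /homcoord i_lt i_eq eqxx divff // subrr cabs0 mul0r.
    lra.
  rewrite /hom_basis /homcoord i_lt (negbTE i_neq) subr0 cabs_div -/yl.
  rewrite mulrAC ler_pdivrMr //; have := ratio i i_lt i_neq; nra.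
have iE : (i : nat) = k by have := ltn_ord i; lia.
rewrite /hom_basis /homcoord iE ltnn (_ : (k == l) = false); last by apply/eqP; lia.
rewrite subr0 cabs_div cabs1 mulrC mul1r ler_pdivrMr //; nra.
Qed.

Lemma escape_proj_cvg s (r c : R) : 1 <= r -> 0 <= c -> expanding_orbit r c s ->
  (exists n, (0 < n)%N /\ dominant l r (s n)) ->
  proj_cvg (fun n => homcoord (s n)) hom_basis.
Proof.
move=> r_ge1 c_ge0 s_exp [n0 [n0_gt0 s_dom]].
have growth := expanding_orbit_growth r_ge1 n0_gt0 s_exp s_dom.
have pos j : 0 < cabs (coord (s (n0 + j)%N) l).
  by have [_ grow_j] := growth j; apply: lt_le_trans grow_j; rewrite exprn_gt0.
apply: (@homcoord_basis_cvg _ (c + 1) n0.+1); first lra.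
  move=> n n_gt; rewrite -cabs_eq0 gt_eqF //.
  by have -> : n = (n0 + (n - n0))%N by lia.
move=> n i n_gt; have nE : n = (n0 + (n - n0.+1)).+1 by lia.
rewrite [in X in X <= _]nE; set j := (n - n0.+1)%N.
have [dom_j grow_j] := growth j.
apply: le_trans (expanding_step_homcoord_le i c_ge0 (pos j) _) _.
  exact: s_exp (ltn_addr _ n0_gt0) dom_j.
rewrite ler_wpM2l ?lef_pV2 ?posrE ?exprn_gt0 //; lra.
Qed.

Lemma proj_cvg_basis_small s : proj_cvg (fun n => homcoord (s n)) hom_basis ->
  forall e, 0 < e -> exists N, forall n, (N <= n)%N ->
    forall i : 'I_k.+1, (i : nat) != l -> cabs (homcoord (s n) i) < e * cabs (coord (s n) l).
Proof.
move=> [j [basis_j [[N1 s_neq0] s_cvg]]] e e_gt0.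
have jl : (j : nat) = l.
  by apply/eqP; move: basis_j; rewrite /hom_basis; case: ((j : nat) == l); rewrite ?eqxx.
have [N2 close] := eventually_forall_fin (fun i => s_cvg i _ e_gt0).
exists (maxn N1 N2) => n; rewrite geq_max => /andP [n_ge1 n_ge2] i i_neq.
have homj : homcoord (s n) j = coord (s n) l by rewrite /homcoord jl l_lt.
have xl_gt0 : 0 < cabs (coord (s n) l) by rewrite lt0r cabs_eq0 -homj s_neq0 ?cabs_ge0.
have := close i n n_ge2; rewrite homj /hom_basis jl eqxx divr1 (negbTE i_neq) subr0.
by rewrite ltc_cabs cabs_div ltr_pdivrMr.
Qed.

Lemma dominant_interior x (r : R) : 0 <= r ->
  (forall m, (m < k)%N -> m != l -> 2 * K * cabs (coord x m) <= cabs (coord x l)) ->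
  2 * (K + 1) + r <= cabs (coord x l) -> interior_Ck (dominant l r) x.
Proof.
move=> r_ge0 x_dom xl_ge; have K_ge0 : 0 <= K by rewrite ler0n.
exists 1; split=> [|y y_near]; first lra.
have near m : (m < k)%N -> cabs (coord y m - coord x m) < 1.
  by move=> m_lt; rewrite !(coord_lt _ m_lt) -ltc_cabs; apply: y_near.
have yl_ge : cabs (coord x l) - 1 <= cabs (coord y l).
  have := ler_cabsB (coord x l) (coord y l - coord x l); rewrite subrKC.
  by have := near l l_lt; lra.
split=> [|m m_lt m_neq]; first lra.
have ym_le : cabs (coord y m) <= cabs (coord x m) + 1.
  have := ler_cabsD (coord x m) (coord y m - coord x m); rewrite subrKC.
  by have := near m m_lt; lra.
have := x_dom m m_lt m_neq; have := ler_wpM2l K_ge0 ym_le; lra.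
Qed.

Lemma proj_cvg_escape s (r : R) : 0 <= r -> proj_cvg (fun n => homcoord (s n)) hom_basis ->
  exists n, (0 < n)%N /\ interior_Ck (dominant l r) (s n).
Proof.
move=> r_ge0 s_cvg; have K_ge0 : 0 <= K by rewrite ler0n.
set D := 2 * (K + 1) + r; have D_gt0 : 0 < D by rewrite /D; lra.
have Dinv_gt0 : 0 < D^-1 by rewrite invr_gt0.
have [N small] := proj_cvg_basis_small s_cvg Dinv_gt0.
exists (maxn N 1); split; first by rewrite leq_max orbT.
have n_ge : (N <= maxn N 1)%N by rewrite leq_maxl.
set x := s (maxn N 1); have xl_ge0 := cabs_ge0 (coord x l).
have xl_ge : D <= cabs (coord x l).
  have k_lt : (k < k.+1)%N by [].
  have k_neq : k != l by apply/eqP; lia.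
  have := small _ n_ge (Ordinal k_lt) k_neq; rewrite /homcoord /= ltnn cabs1.
  by rewrite mulrC ltr_pdivlMr // mul1r => /ltW.
apply: dominant_interior => // m m_lt m_neq; have m_lt1 : (m < k.+1)%N by lia.
have := small _ n_ge (Ordinal m_lt1) m_neq; rewrite /homcoord /= m_lt.
rewrite mulrC ltr_pdivlMr // => /ltW xm_le.
have : 2 * K <= D by rewrite /D; lra.
move=> /(ler_wpM2l (cabs_ge0 (coord x m))); lra.
Qed.

Lemma proj_cvg_basis_iff_escape s (A : ('I_k -> C) -> Prop) (r c : R) :
  1 <= r -> 0 <= c -> (forall x, A x <-> dominant l r x) -> expanding_orbit r c s ->
  proj_cvg (fun n => homcoord (s n)) hom_basis <-> exists n, (0 < n)%N /\ interior_Ck A (s n).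
Proof.
move=> r_ge1 c_ge0 A_dom s_exp; split=> [s_cvg | [n [n_gt0 s_int]]].
  have [n [n_gt0 s_int]] := proj_cvg_escape (ltW (lt_le_trans ltr01 r_ge1)) s_cvg.
  by exists n; split=> //; apply: interior_Ck_sub s_int => x /A_dom.
apply: escape_proj_cvg r_ge1 c_ge0 s_exp _.
by exists n; split=> //; apply/A_dom; apply: interior_Ck_mem s_int.
Qed.

End Escape.

Lemma Xplus_hom_basis (R : realType) (k : nat) : @Xplus R k = hom_basis R k.-1.
Proof. by []. Qed.

Lemma Xminus_hom_basis (R : realType) (k : nat) : @Xminus R k = hom_basis R 0.
Proof. by []. Qed.

Theorem lemma3p3 (R : realType) (k dt d : nat) (mt Mt : R)
  (a : nat -> R[i]) (p : nat -> {mpoly R[i][k.-1]})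
  (Sinv : nat -> ('I_k -> R[i]) -> ('I_k -> R[i])) :
  (3 <= k)%N -> (1 <= dt)%N -> (dt.+2 <= d)%N ->
  0 < mt -> 0 < Mt ->
  (forall n, (0 < n)%N -> mt%:C < `|a n| < Mt%:C) ->
  (forall n, (0 < n)%N -> forall m, `|(p n)@_m| < Mt%:C) ->
  (forall n, (0 < n)%N -> mdegree (shift_last_poly (a n) (p n)) = dt) ->
  (forall n, (0 < n)%N -> forall z,
      Sinv n (weak_shift d (a n) (p n) z) = z /\
      weak_shift d (a n) (p n) (Sinv n z) = z) ->
  exists Rad : R, 1 < Rad /\
    (forall z : 'I_k -> R[i],
       proj_cvg (fun n => homcoord (iter_comp (fun n => weak_shift d (a n) (p n)) n z))
                (@Xplus R k)
       <-> exists n, (0 < n)%N /\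
             interior_Ck (V_k Rad)
               (iter_comp (fun n => weak_shift d (a n) (p n)) n z)) /\
    (forall z : 'I_k -> R[i],
       proj_cvg (fun n => homcoord (iter_comp Sinv n z)) (@Xminus R k)
       <-> exists n, (0 < n)%N /\
             interior_Ck (V_minus Rad) (iter_comp Sinv n z)).
Proof.
move=> k_ge3 dt_gt0 d_ge _ Mt_gt0 a_bound p_bound p_deg Sinv_inv.
have a_le n : (0 < n)%N -> cabs (a n) <= Mt.
  by move=> /a_bound /andP [_]; rewrite ltc_cabs => /ltW.
have p_le n : (0 < n)%N -> forall m, cabs (p n)@_m <= Mt.
  by move=> /p_bound p_lt m; move: (p_lt m); rewrite ltc_cabs => /ltW.
have p_size n : (0 < n)%N -> (msize (p n) <= dt.+1)%N.
  move=> n_gt0; apply: leq_trans (msize_shift_last_poly (a n) (p n)) _.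
  by move: (p_deg n n_gt0); rewrite /mdegree; lia.
set r := escape_radius k dt Mt.
have [r_ge2 _ _] : [/\ 2 <= r, _ & _] := escape_radius_ge dt k_ge3 (ltW Mt_gt0).
exists r; split; first lra.
split=> z.
  rewrite Xplus_hom_basis; apply: (@proj_cvg_basis_iff_escape R k k.-1 _ _ _ r 8); try lra.
  - by rewrite prednK; lia.
  - exact: V_k_dominant.
  - move=> n _ /= s_dom.
    apply: (weak_shift_expanding k_ge3) s_dom => //.
    + exact: a_le.
    + exact: p_le.
    + exact: p_size.
rewrite Xminus_hom_basis; apply: (@proj_cvg_basis_iff_escape R k 0 _ _ _ r (2 * Mt)); try lra.
- lia.
- exact: V_minus_dominant.
- move=> n _ /= s_dom; have [_ Fs] := Sinv_inv n.+1 isT (iter_comp Sinv n z).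
  apply: (weak_shift_preimage_expanding k_ge3) Fs s_dom Mt_gt0 => //.
  + exact: a_le.
  + exact: p_le.
  + exact: p_size.
Qed.
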